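(* For every digraph $F$, $\mathrm{mad}_{\vec{\chi}}(F)\leq 4^{m-n+\mathrm{cc}(F)}(n-1)+1$, where $m=|A(F)|$, $n=|V(F)|$ and $\mathrm{cc}(F)$ is the number of connected components of the underlying graph of $F$.
   Context: $\vec{\chi}(D)$ is the dichromatic number (least $k$ such that $V(D)$ partitions into $k$ sets inducing acyclic subdigraphs). A subdivision of $F$ is obtained by replacing each arc $(x,y)$ by a directed $(x,y)$-path, internally disjoint with new internal vertices. $\mathrm{mad}_{\vec{\chi}}(F)$ is the least integer $c$ such that every digraph $D$ with $\vec{\chi}(D)\ge c$ contains a subdivision of $F$ as a subdigraph (such $c$ exists for every digraph $F$). *)

From mathcomp Require Import all_boot.
Set Implicit Arguments. Unset Strict Implicit. Unset Printing Implicit Defensive.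

(* Parallel arcs are
   impossible in this representation; digons (x->y and y->x) are allowed. *)
Definition digraph (V : finType) (A : rel V) : Prop := irreflexive A.

Definition induced (V : finType) (A : rel V) (S : {set V}) : rel V :=
  fun x y => [&& A x y, x \in S & y \in S].

Definition acyclic_set (V : finType) (A : rel V) (S : {set V}) : bool :=
  [forall x, forall y, induced A S x y ==> ~~ connect (induced A S) y x].

Definition dicolourable (V : finType) (A : rel V) (k : nat) : bool :=
  [exists f : {ffun V -> 'I_k}, [forall i : 'I_k, acyclic_set A [set x | f x == i]]].

(* The dichromatic number: the least k such that D is k-dicolourable.
   (For a loopless digraph such a k <= #|V| always exists; the search
   range 0..#|V| is therefore exhaustive.) *)
Definition dichromatic (V : finType) (A : rel V) : nat :=
  find (dicolourable A) (iota 0 #|V|.+1).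

(* Internal vertices of a directed path written as x :: p : all of p
   except its last vertex. *)
Definition internal (V : eqType) (p : seq V) : seq V := take (size p).-1 p.

Definition contains_subdivision (V W : finType) (A : rel V) (B : rel W) : Prop :=
  exists (phi : W -> V) (P : W -> W -> seq V),
    [/\ injective phi,
        (forall x y, B x y ->
           [/\ path A (phi x) (P x y), last (phi x) (P x y) = phi y
             & uniq (phi x :: P x y)]),
        (forall x y, B x y -> forall v, v \in internal (P x y) ->
           forall z, v != phi z)
      & (forall x1 y1 x2 y2, B x1 y1 -> B x2 y2 -> (x1, y1) != (x2, y2) ->
           forall v, v \in internal (P x1 y1) -> v \notin internal (P x2 y2))].

Definition mad_property (W : finType) (B : rel W) (c : nat) : Prop :=
  forall (V : finType) (A : rel V), digraph A -> c <= dichromatic A ->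
    contains_subdivision A B.

Definition is_mad (W : finType) (B : rel W) (c : nat) : Prop :=
  mad_property B c /\ forall c', mad_property B c' -> c <= c'.

Definition num_arcs (W : finType) (B : rel W) : nat :=
  #|[set p : W * W | B p.1 p.2]|.

Definition underlying (W : finType) (B : rel W) : rel W :=
  fun x y => B x y || B y x.

Definition num_cc (W : finType) (B : rel W) : nat :=
  n_comp (underlying B) W.

From mathcomp Require Import all_boot zify.
From Stdlib Require Import Classical ClassicalEpsilon.
Set Implicit Arguments. Unset Strict Implicit. Unset Printing Implicit Defensive.

(* A digraph that is not (k-1)-dicolourable contains a k-dicritical subset
   C: it is strongly connected and, since a vertex of small in- or
   out-degree could be coloured last, all degrees inside C are at least k-1.
   For k = n this lets us embed greedily any oriented forest on n vertices,
   so a spanning forest of F, with n - cc(F) arcs, has mad at most n.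
   Each further arc uv costs a factor 4: in a strongly connected digraph
   not 4t-dicolourable, sort the vertices by their distances from and to a
   root r; a parity argument yields a class Y, with both distances fixed,
   that is not t-dicolourable, hence contains a subdivision of F - uv, and a
   shortest path from the image of u to r followed by one from r to the image
   of v meets Y only at its ends. *)

Lemma exists_nat_notin (s : seq nat) k : size s < k -> exists2 c, c < k & c \notin s.
Proof.
move=> lt_s_k; apply: NNPP => none; move: lt_s_k; rewrite ltnNge => /negP; apply.
rewrite -[k](size_iota 0); apply: uniq_leq_size (iota_uniq 0 k) _ => c.
rewrite mem_iota add0n => /= lt_c_k; apply: NNPP => c_s; apply: none.
by exists c => //; apply/negP.
Qed.

Lemma leq_connect (T : finType) (e : rel T) (g : T -> nat) x y :
  (forall a b, e a b -> g a < g b) -> connect e x y -> g x <= g y.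
Proof.
move=> g_e /connectP[p e_p ->]; elim: p x e_p => //= z p IHp x /andP[e_xz e_p].
exact: leq_trans (ltnW (g_e _ _ e_xz)) (IHp _ e_p).
Qed.

Definition height (T : finType) (e : rel T) (x : T) := #|[set z | connect e z x]|.

Lemma height_lt (T : finType) (e : rel T) x y :
  e x y -> ~~ connect e y x -> height e x < height e y.
Proof.
move=> e_xy n_yx; apply/proper_card/properP; split.
  by apply/subsetP=> z; rewrite !inE => c_zx; apply: connect_trans c_zx (connect1 e_xy).
by exists y; rewrite !inE ?connect0.
Qed.

Section Dicolouring.
Variables (V : finType) (A : rel V).

(* [f] colours [S] with colours [< k]; [g] strictly increases along every
   monochromatic arc inside [S], which certifies that each colour class is
   acyclic. *)
Definition dicol (S : {set V}) (k : nat) : Prop :=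
  exists f g : V -> nat, (forall x, x \in S -> f x < k) /\
    (forall x y, x \in S -> y \in S -> A x y -> f x = f y -> g x < g y).

Lemma dicolW (S : {set V}) k k' : k <= k' -> dicol S k -> dicol S k'.
Proof. by move=> le_k [f [g [f_lt g_lt]]]; exists f, g; split=> // x /f_lt; lia. Qed.

Lemma dicolS (S S' : {set V}) k : S' \subset S -> dicol S k -> dicol S' k.
Proof.
move=> /subsetP sS'S [f [g [f_lt g_lt]]]; exists f, g; split=> [x /sS'S/f_lt //|].
by move=> x y /sS'S x_S /sS'S y_S; apply: g_lt.
Qed.

Lemma dicol0 k : dicol set0 k.
Proof. by exists (fun=> 0), (fun=> 0); split=> x; rewrite inE. Qed.

Lemma dicol_bounded (S : {set V}) k : dicol S k -> exists f g : V -> nat,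
  [/\ forall x, x \in S -> f x < k,
      forall x y, x \in S -> y \in S -> A x y -> f x = f y -> g x < g y
    & forall x, g x <= #|V|].
Proof.
move=> [f [g [f_lt g_lt]]].
pose mono a b := [&& a \in S, b \in S, A a b & f a == f b].
have g_mono a b : mono a b -> g a < g b.
  by case/and4P=> a_S b_S ab /eqP; apply: g_lt.
exists f, (height mono); split=> // [x y x_S y_S xy fxy|x]; last exact: max_card.
apply: height_lt; first by rewrite /mono x_S y_S xy fxy eqxx.
by apply/negP=> /(leq_connect g_mono); rewrite leqNgt g_lt.
Qed.

Lemma dichromatic_leq k : dicol setT k -> dichromatic A <= k.
Proof.
move=> [f [g [f_lt g_lt]]].
have {}f_lt x : f x < k by apply: f_lt; rewrite inE.
have [le_k_V|lt_V_k] := leqP k #|V|; last first.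
  by apply: leq_trans (find_size _ _) _; rewrite size_iota.
have col_k : dicolourable A k.
  apply/existsP; exists [ffun x => Ordinal (f_lt x)]; apply/forallP=> i.
  set C := [set z | _ == i].
  have g_C a b : induced A C a b -> g a < g b.
    case/and3P=> ab; rewrite !inE !ffunE => /eqP fa /eqP fb.
    by apply: g_lt; rewrite ?inE //; move: fa fb => /(congr1 val) /= -> /(congr1 val) /= ->.
  apply/forallP=> x; apply/forallP=> y; apply/implyP=> /g_C lt_xy.
  by apply/negP=> /(leq_connect g_C); rewrite leqNgt lt_xy.
rewrite leqNgt; apply/negP=> /(before_find 0).
by rewrite nth_iota ?ltnS // add0n col_k.
Qed.

Lemma dicol_dichromatic : digraph A -> dicol setT (dichromatic A).
Proof.
move=> irrA; have [col_V|no_col] := boolP (has (dicolourable A) (iota 0 #|V|.+1)).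
  have := nth_find 0 col_V; rewrite -/(dichromatic A).
  have := col_V; rewrite has_find size_iota => lt_V.
  rewrite nth_iota // add0n => /existsP[h /forallP acyc_h].
  exists (fun x => val (h x)), (fun x => height (induced A [set z | h z == h x]) x).
  split=> [x _|x y _ _ xy /val_inj hxy]; first exact: ltn_ord.
  have ind_xy : induced A [set z | h z == h x] x y by rewrite /induced xy !inE hxy eqxx.
  have /forallP/(_ x)/forallP/(_ y)/implyP/(_ ind_xy) := acyc_h (h x).
  by rewrite -hxy; apply: height_lt.
have -> : dichromatic A = #|V|.+1 by rewrite /dichromatic hasNfind ?size_iota.
exists (fun x => enum_rank x : nat), (fun=> 0); split=> [x _|x y _ _ xy].
  exact/ltnW/ltn_ord.
by move/val_inj/enum_rank_inj=> exy; rewrite exy irrA in xy.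
Qed.

Lemma dichromatic_gtP k : digraph A -> k < dichromatic A <-> ~ dicol setT k.
Proof.
move=> irrA; split=> [lt_k /dichromatic_leq|no_col]; first by rewrite leqNgt lt_k.
by rewrite ltnNge; apply/negP=> le_chi; apply/no_col/(dicolW le_chi)/dicol_dichromatic.
Qed.

Lemma dicol_union (S S1 S2 : {set V}) k :
  S \subset S1 :|: S2 -> {in S :\: S1 & S1, forall x y, ~~ A x y} ->
  dicol S1 k -> dicol S2 k -> dicol S k.
Proof.
move=> /subsetP sS no_arc [f1 [g1 [f1_lt g1_lt]]] [f2 [g2 [f2_lt g2_lt]]].
pose M := (\max_z g1 z).+1.
have g1_M z : g1 z < M by rewrite ltnS; apply: leq_bigmax.
have S2_of x : x \in S -> x \notin S1 -> x \in S2.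
  by move=> /sS; rewrite inE => /orP[->|].
exists (fun x => if x \in S1 then f1 x else f2 x),
       (fun x => if x \in S1 then g1 x else g2 x + M).
split=> [x x_S|x y x_S y_S xy]; first by case: ifP => [/f1_lt|/negbT/(S2_of _ x_S)/f2_lt].
case: ifP => x1; case: ifP => y1.
- exact: g1_lt.
- by move=> _; apply: leq_trans (g1_M x) (leq_addl _ _).
- by have := no_arc x y; rewrite !inE x_S x1 y1 xy => /(_ isT isT).
- by rewrite ltn_add2r; apply: g2_lt; rewrite ?S2_of ?x1 ?y1.
Qed.

Definition dicritical (C : {set V}) k :=
  ~ dicol C k /\ forall x, x \in C -> dicol (C :\ x) k.

Lemma dicritical_exists (S : {set V}) k :
  ~ dicol S k -> exists2 C : {set V}, C \subset S & dicritical C k.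
Proof.
move: {2}#|S| (erefl #|S|) => n; elim/ltn_ind: n S => n IHn S card_S no_col.
have [[x x_S no_col_x]|all_col] := classic (exists2 x, x \in S & ~ dicol (S :\ x) k).
  have [|C sCS crit_C] := IHn _ _ (S :\ x) erefl no_col_x.
    by rewrite -card_S; apply/proper_card/properD1.
  by exists C => //; apply: subset_trans sCS (subD1set _ _).
exists S => //; split=> // x x_S; apply: NNPP => no_col_x; apply: all_col.
by exists x.
Qed.

Lemma dicriticalS (C S : {set V}) k x :
  dicritical C k -> S \subset C -> x \in C -> x \notin S -> dicol S k.
Proof.
move=> [_ crit] sSC x_C x_S; apply: dicolS (crit x x_C).
by apply/subsetP=> y y_S; rewrite !inE (subsetP sSC _ y_S) andbT; apply: contraNneq x_S => <-.
Qed.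

Lemma dicritical_cut (C T : {set V}) k x y :
  dicritical C k -> T \subset C -> {in C :\: T & T, forall a b, ~~ A a b} ->
  x \in T -> y \in C -> y \in T.
Proof.
move=> crit sTC no_arc x_T y_C; apply: NNPP => /negP y_T; apply: crit.1.
apply: (dicol_union (S1 := T) (S2 := C :\: T)) no_arc _ _.
- by apply/subsetP=> z z_C; rewrite !inE z_C andbT orbN.
- exact: dicriticalS crit sTC y_C y_T.
- by apply: dicriticalS crit (subsetDl _ _) (subsetP sTC _ x_T) _; rewrite inE x_T.
Qed.

Lemma dicritical_strong (C : {set V}) k : dicritical C k ->
  exists r, forall y, y \in C -> connect A r y /\ connect A y r.
Proof.
move=> crit; have [C0|[r r_C]] := set_0Vmem C; first by case: crit.1; rewrite C0; apply: dicol0.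
pose e := induced A C.
have e_A a b : connect e a b -> connect A a b.
  by apply: connect_sub => {}a {}b /and3P[ab _ _]; apply: connect1.
have e_of a b : a \in C -> b \in C -> A a b -> e a b.
  by move=> a_C b_C ab; rewrite /e /induced ab a_C b_C.
have C_sub (p : pred V) : [set z in C | p z] \subset C.
  by apply/subsetP=> z; rewrite inE => /andP[].
exists r => y y_C; split; apply: e_A.
- apply: NNPP => /negP r_y.
  suff: r \in [set z in C | ~~ connect e r z] by rewrite inE connect0 andbF.
  apply: (dicritical_cut (x := y) crit (C_sub _) _ _ r_C); last by rewrite inE y_C.
  move=> a b; rewrite !inE => /andP[r_a a_C] /andP[b_C r_b].
  rewrite a_C /= negbK in r_a; apply: contra r_b => ab.
  by rewrite (connect_trans r_a) ?connect1 ?e_of.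
- suff: y \in [set z in C | connect e z r] by rewrite inE => /andP[].
  apply: (dicritical_cut (x := r) crit (C_sub _) _ _ y_C); last by rewrite inE r_C connect0.
  move=> a b; rewrite !inE => /andP[a_r a_C] /andP[b_C b_r].
  rewrite a_C /= in a_r; apply: contra a_r => ab.
  by rewrite (connect_trans _ b_r) ?connect1 ?e_of.
Qed.

Section AddVertex.
Variables (U : {set V}) (v : V) (k : nat).
Hypotheses (irrA : digraph A) (v_U : v \in U).

(* [v] takes a colour unused on its few out-neighbours (resp. in-neighbours)
   and the largest (resp. smallest) rank, so no monochromatic cycle passes through it. *)
Lemma dicolU1_out : #|[set w in U | A v w]| < k -> dicol (U :\ v) k -> dicol U k.
Proof.
move=> small [f [g [f_lt g_lt]]].
have [c c_lt c_new] : exists2 c, c < k & c \notin [seq f w | w <- enum [set w in U | A v w]].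
  by apply: exists_nat_notin; rewrite size_map -cardE.
pose M := (\max_z g z).+1.
have g_M z : g z < M by rewrite ltnS; apply: leq_bigmax.
exists (fun x => if x == v then c else f x), (fun x => if x == v then M else g x).
split=> [x x_U|x y x_U y_U xy]; first by case: eqP => [//|/eqP x_v]; rewrite f_lt // !inE x_v.
case: (eqVneq x v) => [x_v|x_v]; case: (eqVneq y v) => [y_v|y_v].
- by rewrite x_v y_v irrA in xy.
- move=> c_fy; case/negP: c_new; rewrite c_fy; apply: map_f.
  by rewrite mem_enum inE y_U -x_v.
- by move=> _; apply: g_M.
- by apply: g_lt; rewrite // !inE ?x_v ?y_v.
Qed.

Lemma dicolU1_in : #|[set w in U | A w v]| < k -> dicol (U :\ v) k -> dicol U k.
Proof.
move=> small [f [g [f_lt g_lt]]].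
have [c c_lt c_new] : exists2 c, c < k & c \notin [seq f w | w <- enum [set w in U | A w v]].
  by apply: exists_nat_notin; rewrite size_map -cardE.
exists (fun x => if x == v then c else f x), (fun x => if x == v then 0 else (g x).+1).
split=> [x x_U|x y x_U y_U xy]; first by case: eqP => [//|/eqP x_v]; rewrite f_lt // !inE x_v.
case: (eqVneq x v) => [x_v|x_v]; case: (eqVneq y v) => [y_v|y_v] //.
- by rewrite x_v y_v irrA in xy.
- move=> fx_c; case/negP: c_new; rewrite -fx_c; apply: map_f.
  by rewrite mem_enum inE x_U -y_v.
- by move=> fxy; rewrite ltnS; apply: g_lt; rewrite // !inE ?x_v ?y_v.
Qed.

End AddVertex.

Lemma dicritical_degree (C : {set V}) k v : digraph A -> dicritical C k -> v \in C ->
  k <= #|[set w in C | A v w]| /\ k <= #|[set w in C | A w v]|.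
Proof.
move=> irrA [no_col crit] v_C; split; rewrite leqNgt; apply/negP=> small; apply: no_col.
- exact: dicolU1_out small (crit v v_C).
- exact: dicolU1_in small (crit v v_C).
Qed.

(* Levels [d] of equal parity are separated by [H], so the even and the odd
   levels can use two disjoint palettes of [k] colours, ranked first by [H]. *)
Lemma dicol_levels (S : {set V}) k (d H : V -> nat) :
  (forall x y, x \in S -> y \in S -> A x y -> odd (d x) = odd (d y) ->
     d x = d y \/ H x < H y) ->
  (forall x y, d x = d y -> H x = H y) ->
  (forall i, dicol [set x in S | d x == i] k) -> dicol S (k + k).
Proof.
move=> level_arc H_level col_level.
have col_fg i : exists fg : (V -> nat) * (V -> nat),
    [/\ forall x, x \in S -> d x = i -> fg.1 x < k,
        forall x y, x \in S -> y \in S -> d x = i -> d y = i -> A x y ->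
          fg.1 x = fg.1 y -> fg.2 x < fg.2 y
      & forall x, fg.2 x <= #|V|].
  have [f [g [f_lt g_lt g_le]]] := dicol_bounded (col_level i).
  exists (f, g); split=> [x x_S dx|x y x_S y_S dx dy xy|//] /=.
    by apply: f_lt; rewrite inE x_S dx eqxx.
  by apply: (g_lt x y); rewrite // inE ?x_S ?y_S ?dx ?dy eqxx.
have [c c_col] := choice _ col_fg.
exists (fun x => (c (d x)).1 x + odd (d x) * k),
       (fun x => H x * #|V|.+1 + (c (d x)).2 x).
split=> [x x_S|x y x_S y_S xy].
  have [f_lt _ _] := c_col (d x); have := f_lt x x_S erefl.
  by case: (odd (d x)); rewrite /= ?mul1n ?mul0n; lia.
have [fx_lt _ gx_le] := c_col (d x); have [fy_lt _ gy_le] := c_col (d y).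
have := fx_lt x x_S erefl; have := fy_lt y y_S erefl.
have := gx_le x; have := gy_le y.
move=> gy gx fy fx same_col.
have par : odd (d x) = odd (d y).
  by move: same_col; case: (odd (d x)); case: (odd (d y)); rewrite /= ?mul1n ?mul0n; lia.
have [dxy|lt_H] := level_arc x y x_S y_S xy par; last by nia.
move: same_col; rewrite (H_level _ _ dxy) -dxy ltn_add2l => /addIn same_col.
by have [_ g_lt _] := c_col (d x); apply: (g_lt x y).
Qed.

Lemma not_dicol_levels (S : {set V}) k (d H : V -> nat) :
  (forall x y, x \in S -> y \in S -> A x y -> odd (d x) = odd (d y) ->
     d x = d y \/ H x < H y) ->
  (forall x y, d x = d y -> H x = H y) ->
  ~ dicol S (k + k) -> exists i, ~ dicol [set x in S | d x == i] k.
Proof.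
move=> level_arc H_level no_col; apply: NNPP => all_col.
apply/no_col/(dicol_levels level_arc H_level) => i.
by apply: NNPP => no_col_i; apply: all_col; exists i.
Qed.

End Dicolouring.

Section Distance.
Variables (V : finType) (e : rel V) (r : V).

Definition reach n :=
  iter n (fun X : {set V} => X :|: [set y | [exists z in X, e z y]]) [set r].

Definition dist x := find (fun n => x \in reach n) (iota 0 #|V|.+1).

Lemma reach_mono m n : m <= n -> reach m \subset reach n.
Proof.
move=> /subnK <-; elim: (n - m) => [|k IHk]; first exact: subxx.
by apply: subset_trans IHk _; apply: subsetUl.
Qed.

Lemma reachS n x y : x \in reach n -> e x y -> y \in reach n.+1.
Proof.
by move=> x_n xy; rewrite inE; apply/orP; right; rewrite inE; apply/existsP; exists x; rewrite x_n.
Qed.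

Lemma reach_connect n x : x \in reach n -> connect e r x.
Proof.
elim: n x => [|n IHn] x /=; first by rewrite inE => /eqP ->.
rewrite inE => /orP[/IHn //|]; rewrite inE => /existsP[z /andP[z_n zx]].
exact: connect_trans (IHn _ z_n) (connect1 zx).
Qed.

Lemma connect_reach x : connect e r x -> x \in reach #|V|.
Proof.
move=> /connectP[p e_p ->]; case: (shortenP e_p) => q e_q uniq_q _.
have last_q : last r q \in reach (size q).
  elim/last_ind: q e_q {uniq_q} => [|q z IHq]; first by rewrite inE.
  by rewrite rcons_path last_rcons size_rcons => /andP[/IHq q_n qz]; apply: reachS qz.
apply: subsetP (reach_mono _) _ last_q; move/card_uniqP: uniq_q => /= card_q.
by have := max_card (mem (r :: q)); rewrite card_q => /ltnW.
Qed.

Lemma dist_leq n x : x \in reach n -> dist x <= n.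
Proof.
move=> x_n; have [le_n_V|lt_V_n] := leqP n #|V|; last first.
  by apply: leq_trans (find_size _ _) _; rewrite size_iota.
rewrite leqNgt; apply/negP=> /(before_find 0).
by rewrite nth_iota ?ltnS // add0n x_n.
Qed.

Lemma dist_ub x : dist x <= #|V|.+1.
Proof. by apply: leq_trans (find_size _ _) _; rewrite size_iota. Qed.

Lemma mem_reach_dist x : connect e r x -> x \in reach (dist x).
Proof.
move=> /connect_reach x_V.
have has_x : has (fun n => x \in reach n) (iota 0 #|V|.+1).
  by apply/hasP; exists #|V|; rewrite // mem_iota ltnS leqnn.
have := nth_find 0 has_x; have := has_x; rewrite has_find size_iota => lt_x.
by rewrite nth_iota // add0n.
Qed.

Lemma dist_arc x y : connect e r x -> e x y -> dist y <= (dist x).+1.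
Proof. by move=> /mem_reach_dist x_d xy; apply/dist_leq/(reachS x_d). Qed.

Lemma dist_path x : connect e r x -> exists p, [/\ path e r p, last r p = x &
  forall v, v \in r :: p -> v = x \/ dist v < dist x].
Proof.
move: {2}(dist x) (leqnn (dist x)) => n; elim: n x => [|n IHn] x.
  rewrite leqn0 => /eqP d0 /mem_reach_dist; rewrite d0 inE => /eqP ->.
  by exists [::]; split=> // v; rewrite inE => /eqP ->; left.
move=> le_n r_x; have [le_x_n|lt_n] := leqP (dist x) n; first exact: IHn le_x_n r_x.
have {le_n lt_n} dx : dist x = n.+1 by lia.
have := mem_reach_dist r_x; rewrite dx inE => /orP[/dist_leq|]; first by lia.
rewrite inE => /existsP[z /andP[z_n zx]].
have [p [e_p last_p p_lt]] := IHn z (dist_leq z_n) (reach_connect z_n).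
exists (rcons p x); split; rewrite ?rcons_path ?e_p ?last_p ?last_rcons //.
move=> v; rewrite -rcons_cons mem_rcons inE => /orP[/eqP ->|/p_lt]; first by left.
by case=> [->|]; right; have := dist_leq z_n; lia.
Qed.

End Distance.

Lemma mem_internal (T : eqType) (a w : T) p : uniq (a :: p) -> w \in internal p ->
  [/\ w != a, w != last a p & w \in p].
Proof.
case/lastP: p => [|p z] //; rewrite /internal size_rcons /= -cats1 take_size_cat //.
rewrite last_cat /= cats1 rcons_uniq mem_rcons inE => /andP[a_pz /andP[z_p _]] w_p.
rewrite mem_rcons inE w_p orbT; split=> //.
- by apply: contraNneq a_pz => <-; rewrite w_p orbT.
- by apply: contraNneq z_p => <-.
Qed.

Lemma internal_map (T T' : eqType) (f : T -> T') s : internal (map f s) = map f (internal s).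
Proof. by rewrite /internal map_take size_map. Qed.

Lemma last_rev_belast (T : Type) (x : T) p : last (last x p) (rev (belast x p)) = x.
Proof. by case: p => //= y p; rewrite rev_cons last_rcons. Qed.

Section Levels.
Variables (V : finType) (A : rel V) (r : V) (C : {set V}).
Hypothesis strong_C : forall y, y \in C -> connect A r y /\ connect A y r.

Local Notation dout := (dist A r).
Local Notation din := (dist [rel x y | A y x] r).

Lemma level_set k : ~ dicol A C (4 * k) ->
  exists i j, ~ dicol A [set x in C | (dout x == i) && (din x == j)] k.
Proof.
have r_C y : y \in C -> connect A r y by case/strong_C.
have C_r y : y \in C -> connect [rel x y | A y x] r y by rewrite connect_rev => /strong_C[].
rewrite (_ : 4 * k = (k + k) + (k + k)); last by lia.
move=> /(not_dicol_levels (d := dout) (H := fun x => #|V|.+2 - dout x)) [].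
- move=> x y x_C y_C xy.
  have := dist_arc (r_C _ x_C) xy; have := dist_ub A r x.
  case: (ltngtP (dout y) (dout x)) => [lt_yx|lt_xy|->]; [right; lia| |by left].
  by move=> _ le_y; rewrite (_ : dout y = (dout x).+1) /=; [case: odd | lia].
- by move=> x y ->.
move=> i /(not_dicol_levels (d := din) (H := din)) [].
- move=> x y; rewrite !inE => /andP[x_C _] /andP[y_C _] xy.
  have := dist_arc (C_r _ y_C) (xy : [rel x y | A y x] y x).
  case: (ltngtP (din x) (din y)) => [lt_xy|lt_yx|->]; [by right| |by left].
  by move=> le_x; rewrite (_ : din x = (din y).+1) /=; [case: odd | lia].
- by move=> x y ->.
move=> j no_col_ij; exists i, j; apply: contra_not no_col_ij; apply: dicolS.
by apply/subsetP=> x; rewrite !inE andbA.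
Qed.

Lemma bypass_path a b : a \in C -> b \in C -> exists p,
  [/\ path A a p, last a p = b, uniq (a :: p) &
      forall w, w \in internal p -> din w < din a \/ dout w < dout b].
Proof.
move=> /strong_C[_ a_r] /strong_C[r_b _].
have [p [rev_p last_p p_lt]] : exists p, [/\ path [rel x y | A y x] r p, last r p = a &
    forall v, v \in r :: p -> v = a \/ din v < din a].
  by apply: dist_path; rewrite connect_rev.
have [q [A_q last_q q_lt]] := dist_path r_b.
pose s := rev (belast r p) ++ q.
have A_s : path A a s by rewrite cat_path -last_p rev_path rev_p last_rev_belast.
have last_s : last a s = b by rewrite last_cat -last_p last_rev_belast.
move: last_s; case: (shortenP A_s) => p0 A_p0 uniq_p0 sub_p0 last_p0.
exists p0; split=> // w /(mem_internal uniq_p0)[w_a w_b /sub_p0].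
rewrite last_p0 in w_b; rewrite mem_cat => /orP[|w_q].
- rewrite mem_rev => /mem_belast/p_lt[w_eq|]; last by left.
  by rewrite w_eq eqxx in w_a.
- have [|w_eq|] := q_lt w; [by rewrite inE w_q orbT|by rewrite w_eq eqxx in w_b|by right].
Qed.
End Levels.

Definition subdivision (V W : finType) (A : rel V) (B : rel W)
    (phi : W -> V) (P : W -> W -> seq V) : Prop :=
  [/\ injective phi,
      (forall x y, B x y ->
         [/\ path A (phi x) (P x y), last (phi x) (P x y) = phi y
           & uniq (phi x :: P x y)]),
      (forall x y, B x y -> forall v, v \in internal (P x y) ->
         forall z, v != phi z)
    & (forall x1 y1 x2 y2, B x1 y1 -> B x2 y2 -> (x1, y1) != (x2, y2) ->
         forall v, v \in internal (P x1 y1) -> v \notin internal (P x2 y2))].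

Lemma contains_subdivision_subrel (V W : finType) (A : rel V) (B B' : rel W) :
  subrel B' B -> contains_subdivision A B -> contains_subdivision A B'.
Proof.
move=> sB [phi [P [inj_phi P_path P_int P_disj]]]; exists phi, P; split=> //.
- by move=> x y /sB /P_path.
- by move=> x y /sB /P_int.
- by move=> x1 y1 x2 y2 /sB B1 /sB B2; apply: P_disj.
Qed.

Lemma mad_property_subrel (W : finType) (B B' : rel W) c :
  subrel B' B -> mad_property B c -> mad_property B' c.
Proof. by move=> sB madB V A irrA chiA; apply/(contains_subdivision_subrel sB)/madB. Qed.

Lemma subdivision_add_arc (V W : finType) (A : rel V) (E : rel W) (Y : {set V})
    phi P (a : W * W) p :
  subdivision A E phi P -> (forall z, phi z \in Y) ->
  (forall x y, E x y -> {subset internal (P x y) <= Y}) ->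
  path A (phi a.1) p -> last (phi a.1) p = phi a.2 -> uniq (phi a.1 :: p) ->
  (forall w, w \in internal p -> w \notin Y) ->
  subdivision A (fun x y => E x y || ((x, y) == a)) phi
    (fun x y => if (x, y) == a then p else P x y).
Proof.
case: a => u v /= [inj_phi P_path P_int P_disj] phi_Y P_Y A_p last_p uniq_p p_Y.
have P_p x y w : E x y -> w \in internal (P x y) -> w \notin internal p.
  by move=> Exy /(P_Y _ _ Exy) w_Y; apply: contraL w_Y; apply: p_Y.
split=> // [x y|x y|x1 y1 x2 y2].
- by case: eqP => [[-> ->] _ //|_]; rewrite orbF; apply: P_path.
- case: eqP => [_ _ w /p_Y w_Y z|_]; last by rewrite orbF; apply: P_int.
  by apply: contraNneq w_Y => ->.
- case: eqP => [->|_]; case: eqP => [->|_]; rewrite ?orbF ?orbT.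
  + by move=> _ _ /eqP.
  + by move=> _ E2 _ w w_p; apply: contraL w_p; apply: P_p E2.
  + by move=> E1 _ _ w /(P_p _ _ _ E1).
  + by move=> ne; apply: P_disj.
Qed.

Section InducedSubdigraph.
Variables (V : finType) (A : rel V) (Y : {set V}).

Local Notation AY := (fun a b : {x | x \in Y} => A (val a) (val b)).

Lemma dicol_val k : dicol AY setT k -> dicol A Y k.
Proof.
move=> [f [g [f_lt g_lt]]].
exists (fun x => oapp f 0 (insub x)), (fun x => oapp g 0 (insub x)).
split=> [x x_Y|x y x_Y y_Y]; first by rewrite insubT /= f_lt.
by rewrite !insubT /= => xy; apply: g_lt; rewrite ?inE.
Qed.

Lemma subdivision_within (W : finType) (E : rel W) t :
  digraph A -> mad_property E t.+1 -> ~ dicol A Y t ->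
  exists phi P, [/\ subdivision A E phi P, forall z, phi z \in Y
                  & forall x y, E x y -> {subset internal (P x y) <= Y}].
Proof.
move=> irrA madE no_col.
have irrAY : digraph AY by move=> a; apply: irrA.
have chiAY : t.+1 <= dichromatic AY by apply/(dichromatic_gtP _ irrAY) => /dicol_val.
have [phi [P [inj_phi P_path P_int P_disj]]] := madE _ _ irrAY chiAY.
exists (val \o phi), (fun x y => map val (P x y)); split=> [|z|x y _ w]; last 2 first.
- exact: valP.
- by rewrite internal_map => /mapP[w' _ ->]; apply: valP.
split=> [z1 z2 /val_inj/inj_phi //|x y /P_path[p_path p_last p_uniq]|x y /P_int P_int_xy w|].
- split; first by rewrite /= path_map.
  + by rewrite /= last_map p_last.
  + by move: p_uniq; rewrite -(map_inj_uniq val_inj).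
- by rewrite internal_map => /mapP[w' /P_int_xy w'_phi ->] z; rewrite (inj_eq val_inj).
- move=> x1 y1 x2 y2 E1 E2 ne w; rewrite !internal_map => /mapP[w' w'_P ->].
  by rewrite (mem_map val_inj); apply: P_disj w'_P.
Qed.

End InducedSubdigraph.

Lemma mad_add_arc (W : finType) (E : rel W) (a : W * W) t :
  mad_property E t.+1 -> mad_property (fun x y => E x y || ((x, y) == a)) (4 * t).+1.
Proof.
move=> madE V A irrA /(dichromatic_gtP _ irrA) no_col.
have [C _ crit_C] := dicritical_exists no_col.
have [r strong_C] := dicritical_strong crit_C.
have [i [j no_col_Y]] := level_set strong_C crit_C.1.
set Y := [set x in C | _] in no_col_Y.
have [phi [P [subd_P phi_Y P_Y]]] := subdivision_within irrA madE no_col_Y.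
have phi_C z : phi z \in C by have := phi_Y z; rewrite inE => /andP[].
have [p [A_p last_p uniq_p p_lt]] := bypass_path strong_C (phi_C a.1) (phi_C a.2).
exists phi, (fun x y => if (x, y) == a then p else P x y).
have p_Y w : w \in internal p -> w \notin Y.
  move=> /p_lt; have := phi_Y a.1; have := phi_Y a.2.
  rewrite !inE => /and3P[_ /eqP-> _] /and3P[_ _ /eqP->] lt_w.
  by apply/negP=> /and3P[_ /eqP dw /eqP dw']; lia.
exact: subdivision_add_arc subd_P phi_Y P_Y A_p last_p uniq_p p_Y.
Qed.

Lemma mad_add_arcs (W : finType) (E : rel W) (R : seq (W * W)) c :
  mad_property E c.+1 ->
  mad_property (fun x y => E x y || ((x, y) \in R)) (4 ^ size R * c).+1.
Proof.
elim: R => [|a R IHR] madE.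
  by rewrite mul1n; apply: mad_property_subrel madE => x y; rewrite orbF.
rewrite /= expnS -mulnA; apply: mad_property_subrel (mad_add_arc a (IHR madE)) => x y.
by rewrite in_cons -orbA (orbC ((x, y) \in R)).
Qed.

Section Forest.
Variable W : finType.

(* A forest is grown vertex by vertex, the head of the sequence being the last
   vertex added: [(w, None)] adds a root [w], while [(w, Some (p, b))] adds a
   leaf [w] attached to an earlier vertex [p] by the arc [p -> w] if [b] and
   [w -> p] otherwise. *)
Definition forest_item := (W * option (W * bool))%type.

Definition item_arc (e : forest_item) : option (W * W) :=
  if e.2 is Some (p, b) then Some (if b then (p, e.1) else (e.1, p)) else None.

Definition forest_arcs (s : seq forest_item) := pmap item_arc s.

Definition forest_roots (s : seq forest_item) := [seq e.1 | e <- s & e.2 == None].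

Fixpoint forest (s : seq forest_item) : bool :=
  if s is e :: s' then
    [&& e.1 \notin map fst s',
        (if e.2 is Some (p, _) then p \in map fst s' else true) & forest s']
  else true.

Lemma forest_uniq s : forest s -> uniq (map fst s).
Proof. by elim: s => //= e s IHs /and3P[-> _ /IHs]. Qed.

Lemma forest_arc_mem s x y : forest s -> (x, y) \in forest_arcs s ->
  [/\ x \in map fst s, y \in map fst s & x != y].
Proof.
elim: s => //= -[w [[p b]|]] s IHs /and3P[/= w_s p_s f_s]; rewrite /forest_arcs /=;
  last by move=> /(IHs f_s)[x_s y_s xy]; rewrite !inE x_s y_s !orbT.
rewrite inE => /orP[|/(IHs f_s)[x_s y_s xy]]; last by rewrite !inE x_s y_s !orbT.
have p_w : p != w by apply: contraNneq w_s => <-.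
by case: b => /eqP[-> ->]; rewrite !inE eqxx p_s ?orbT // eq_sym.
Qed.

Lemma forest_arcs_uniq s : forest s -> uniq (forest_arcs s).
Proof.
elim: s => //= -[w [[p b]|]] s IHs /and3P[/= w_s p_s f_s]; last exact: IHs.
rewrite [uniq _]/= -/(forest_arcs s) IHs // andbT; apply/negP => arc_s.
by case: b arc_s => /(forest_arc_mem f_s)[x_s y_s _]; rewrite ?x_s ?y_s in w_s.
Qed.

Lemma size_forest_arcs s : size (forest_arcs s) + size (forest_roots s) = size s.
Proof.
elim: s => //= -[w [[p b]|]] s IHs; rewrite /forest_arcs /forest_roots /= -?IHs //.
by rewrite addnS.
Qed.

End Forest.

Section ForestEmbedding.
Variables (W V : finType) (A : rel V) (U : {set V}) (n : nat) (v0 : V).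
Hypotheses (irrA : digraph A) (n_U : n <= #|U|).
Hypothesis deg_U : forall v, v \in U ->
  n.-1 <= #|[set w in U | A v w]| /\ n.-1 <= #|[set w in U | A w v]|.

Lemma fresh_neighbour (N Used : {set V}) x :
  n.-1 <= #|N| -> x \in Used -> x \notin N -> #|Used| < n ->
  exists2 y, y \in N & y \notin Used.
Proof.
move=> le_N x_Used x_N lt_Used; apply/subsetPn/negP => /subsetP sub.
have : N \subset Used :\ x.
  by apply/subsetP=> z z_N; rewrite !inE sub // andbT; apply: contraNneq x_N => <-.
by move/subset_leq_card; have := cardsD1 x Used; rewrite x_Used; lia.
Qed.

Lemma fresh_vertex (Used : {set V}) (q : option (V * bool)) : #|Used| < n ->
  (if q is Some (u, _) then u \in U /\ u \in Used else True) ->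
  exists y, [/\ y \in U, y \notin Used &
                if q is Some (u, b) then (if b then A u y else A y u) else true].
Proof.
move=> lt_Used; case: q => [[u b] [u_U u_Used]|_]; last first.
  have [y y_U y_Used] : exists2 y, y \in U & y \notin Used.
    by apply/subsetPn/negP => /subset_leq_card; lia.
  by exists y.
have [deg_out deg_in] := deg_U u_U.
case: b.
  have [|y] := fresh_neighbour deg_out u_Used _ lt_Used; first by rewrite inE irrA andbF.
  by rewrite inE => /andP[y_U uy] y_Used; exists y.
have [|y] := fresh_neighbour deg_in u_Used _ lt_Used; first by rewrite inE irrA andbF.
by rewrite inE => /andP[y_U yu] y_Used; exists y.
Qed.

Lemma forest_embed (s : seq (forest_item W)) : forest s -> size s <= n ->
  exists phi : W -> V,
    [/\ {in map fst s &, injective phi}, {in map fst s, forall z, phi z \in U}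
      & forall x y, (x, y) \in forest_arcs s -> A (phi x) (phi y)].
Proof.
elim: s => [|[w e] s IHs] /=; first by exists (fun=> v0).
move=> /and3P[w_s e_s f_s] size_s.
have [phi [inj_phi phi_U phi_A]] := IHs f_s (ltnW size_s).
pose Used := [set phi z | z in map fst s].
have card_Used : #|Used| < n.
  apply: leq_ltn_trans (leq_imset_card _ _) _.
  by rewrite (card_uniqP _) ?size_map // forest_uniq.
have [y [y_U y_Used y_A]] : exists y, [/\ y \in U, y \notin Used &
    if e is Some (p, b) then (if b then A (phi p) y else A y (phi p)) else true].
  case: e e_s => [[p b] p_s|_]; last exact: fresh_vertex None card_Used I.
  exact: fresh_vertex (Some (phi p, b)) card_Used (conj (phi_U _ p_s) (imset_f _ p_s)).
pose phi' z := if z == w then y else phi z.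
have phi'E : {in map fst s, phi' =1 phi}.
  by move=> z z_s; rewrite /phi'; case: eqP => // z_w; rewrite -z_w z_s in w_s.
have phi_y z : z \in map fst s -> phi z != y.
  by move=> z_s; apply: contraNneq y_Used => <-; apply: imset_f.
exists phi'; split.
- move=> a b; rewrite !inE => /orP[/eqP->|a_s] /orP[/eqP->|b_s] //.
  + by rewrite (phi'E b b_s) /phi' eqxx => /esym/eqP; rewrite (negbTE (phi_y _ b_s)).
  + by rewrite (phi'E a a_s) /phi' eqxx => /eqP; rewrite (negbTE (phi_y _ a_s)).
  + by rewrite !phi'E //; apply: inj_phi.
- move=> z; rewrite inE => /orP[/eqP->|z_s]; first by rewrite /phi' eqxx.
  by rewrite phi'E //; apply: phi_U.
- have arc_s a b : (a, b) \in forest_arcs s -> A (phi' a) (phi' b).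
    by move=> ab; have [a_s b_s _] := forest_arc_mem f_s ab; rewrite !phi'E //; apply: phi_A.
  move=> a b; case: e e_s y_A => [[p c] p_s|_ _]; last exact: arc_s.
  rewrite [forest_arcs _]/= -/(forest_arcs s) inE => y_A /orP[|/arc_s //].
  by case: c y_A => y_A /eqP[-> ->]; rewrite (phi'E p p_s) /phi' eqxx.
Qed.
End ForestEmbedding.

Lemma mad_forest (W : finType) (s : seq (forest_item W)) : forest s -> size s = #|W| ->
  mad_property (fun x y => (x, y) \in forest_arcs s) (#|W|.-1).+1.
Proof.
move=> f_s size_s V A irrA /(dichromatic_gtP _ irrA) no_col.
have [U _ crit_U] := dicritical_exists no_col.
have [U0|[v0 v0_U]] := set_0Vmem U; first by case: crit_U.1; rewrite U0; apply: dicol0.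
have deg_U := dicritical_degree irrA crit_U.
have W_U : #|W| <= #|U|.
  have [out_v0 _] := deg_U _ v0_U.
  have : [set w in U | A v0 w] \subset U :\ v0.
    apply/subsetP=> w; rewrite !inE => /andP[-> v0w]; rewrite andbT.
    by apply: contraTneq v0w => ->; rewrite irrA.
  by move/subset_leq_card; have := cardsD1 v0 U; rewrite v0_U; lia.
have [phi [inj_phi phi_U phi_A]] := forest_embed v0 irrA W_U deg_U f_s (eq_leq size_s).
have s_W z : z \in map fst s.
  have card_s : #|map fst s| = #|W| by rewrite (card_uniqP _) ?size_map ?forest_uniq.
  by have /(subset_cardP card_s) -> := subset_predT (mem (map fst s)).
exists phi, (fun x y => [:: phi y]); split=> // [a b|x y xy]; first exact: inj_phi.
have [_ _ x_y] := forest_arc_mem f_s xy; rewrite /= phi_A // inE andbT; split=> //.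
by rewrite andbT (inj_in_eq inj_phi).
Qed.

Section SpanningForest.
Variables (W : finType) (B : rel W).

Definition subforest (s : seq (forest_item W)) :=
  [/\ forest s, forall a, a \in forest_arcs s -> B a.1 a.2
    & {in forest_roots s &, forall x y, connect (underlying B) x y -> x = y}].

Lemma underlying_connect_sym : connect_sym (underlying B).
Proof. by apply: sym_connect_sym => x y; rewrite /underlying orbC. Qed.

Lemma mem_forest_roots (s : seq (forest_item W)) x : x \in forest_roots s -> x \in map fst s.
Proof. by case/mapP=> e; rewrite mem_filter => /andP[_ e_s] ->; apply: map_f. Qed.

Lemma subforest_grow (s : seq (forest_item W)) :
  subforest s -> size s < #|W| -> exists e, subforest (e :: s).
Proof.
move=> [f_s arcs_B roots_s] size_s.
pose attachable (wz : W * W) :=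
  [&& wz.1 \notin map fst s, wz.2 \in map fst s & underlying B wz.2 wz.1].
case: (pickP attachable) => [[w z] /and3P[/= w_s z_s zw]|none].
  exists (w, Some (z, B z w)); split=> [|a|]; rewrite ?[forest _]/= ?w_s ?z_s //.
  rewrite [forest_arcs _]/= -/(forest_arcs s) inE => /orP[/eqP->|/arcs_B //].
  by case: ifP => /= [-> //|bzw]; move: zw; rewrite /underlying bzw.
have [w w_s] : exists w, w \notin map fst s.
  apply/existsP; rewrite -negb_forall; apply/negP=> /forallP all_s; move: size_s.
  rewrite -(size_map fst) -(card_uniqP (forest_uniq f_s)) ltnNge => /negP; apply.
  by apply/subset_leq_card/subsetP=> x _; apply: all_s.
have closed_s : closed (underlying B) (mem (map fst s)).
  apply: (intro_closed underlying_connect_sym) => x y xy x_s.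
  by apply: contraFT (none (y, x)) => y_s; rewrite /attachable /= y_s x_s xy.
exists (w, None); split; rewrite /= ?w_s //.
have w_free x : x \in forest_roots s -> ~~ connect (underlying B) x w.
  move=> /mem_forest_roots x_s.
  by apply: contra w_s => xw; rewrite -(closed_connect closed_s xw).
have -> : forest_roots ((w, None) :: s) = w :: forest_roots s by [].
move=> x y; rewrite !inE => /orP[/eqP->|x_r] /orP[/eqP->|y_r] // conn.
- by move: (w_free y y_r); rewrite underlying_connect_sym conn.
- by move: (w_free x x_r); rewrite conn.
- exact: roots_s.
Qed.

Lemma spanning_forest_exists : exists s, subforest s /\ size s = #|W|.
Proof.
suff grow k : k <= #|W| -> exists s, subforest s /\ size s = k by apply: grow.
elim: k => [_|k IHk lt_k]; first by exists [::]; split.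
have [s [sub_s size_s]] := IHk (ltnW lt_k).
have [|e sub_es] := subforest_grow sub_s; first by rewrite size_s.
by exists (e :: s); rewrite /= size_s.
Qed.

Lemma size_forest_roots (s : seq (forest_item W)) :
  subforest s -> size (forest_roots s) <= num_cc B.
Proof.
move=> [f_s _ roots_s].
have uniq_roots : uniq (map (root (underlying B)) (forest_roots s)).
  have uniq_r : uniq (forest_roots s).
    by apply: subseq_uniq (forest_uniq f_s); apply/map_subseq/filter_subseq.
  rewrite map_inj_in_uniq //.
  by move=> x y x_r y_r /(rootP underlying_connect_sym); apply: roots_s.
rewrite -(size_map (root (underlying B))) -(card_uniqP uniq_roots) /num_cc.
apply: subset_leq_card; apply/subsetP=> _ /mapP[x _ ->].
by rewrite inE /= (roots_root underlying_connect_sym).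
Qed.
End SpanningForest.

Lemma is_mad_exists (W : finType) (B : rel W) c :
  mad_property B c -> exists2 m, is_mad B m & m <= c.
Proof.
elim/ltn_ind: c => c IHc mad_c.
have [[c' lt_c' mad_c']|no_less] := classic (exists2 c', c' < c & mad_property B c').
  by have [m mad_m le_m] := IHc c' lt_c' mad_c'; exists m => //; apply: leq_trans le_m (ltnW _).
exists c => //; split=> // c' mad_c'; rewrite leqNgt; apply/negP=> lt_c'.
by apply: no_less; exists c'.
Qed.

(* [B] need not be loopless: a loop [(x, x)] is realised by the empty path at [phi x]. *)
Theorem corollary36 (W : finType) (B : rel W) :
  digraph B ->
  exists c : nat, is_mad B c /\
    c <= 4 ^ (num_arcs B + num_cc B - #|W|) * (#|W| - 1) + 1.
Proof.
move=> _; have [s [sub_s size_s]] := spanning_forest_exists B.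
have [f_s arcs_B _] := sub_s.
pose R := enum ([set a | B a.1 a.2] :\: [set a in forest_arcs s]).
have mad_B : mad_property B (4 ^ size R * #|W|.-1).+1.
  apply: mad_property_subrel (mad_add_arcs (R := R) (mad_forest f_s size_s)) => x y Bxy.
  by rewrite mem_enum !inE Bxy andbT orbN.
have size_R : size R <= num_arcs B + num_cc B - #|W|.
  have arcs_sub : [set a in forest_arcs s] \subset [set a | B a.1 a.2].
    by apply/subsetP=> a; rewrite !inE => /arcs_B.
  rewrite -cardE cardsD (setIidPr arcs_sub) -/(num_arcs B) cardsE.
  rewrite (card_uniqP (forest_arcs_uniq f_s)).
  have := size_forest_arcs s; have := size_forest_roots sub_s; rewrite size_s.
  by set a := size (forest_arcs s); lia.
have [c mad_c le_c] := is_mad_exists mad_B.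
exists c; split=> //; apply: leq_trans le_c _.
by rewrite addn1 ltnS subn1 leq_mul2r leq_pexp2l ?orbT.
Qed.
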